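(* Let $(\Delta,R)$ be a gentle quiver with $f_{(\Delta,R)}=m\cdot[0,3]+[p+m+2,\,p]$ for some $m,p\in\mathbb N$, and let $\alpha\in\Delta_1$. Then $\alpha$ is a branch arrow if and only if $\alpha\notin\mathcal C$, and $\alpha$ is a cycle arrow if and only if $\alpha\in\mathcal C$.
   Context: A quiver $\Delta$ has finite vertex set $\Delta_0$, arrow set $\Delta_1$, maps $s,t$. A path of length $n\ge1$ is $(\alpha_1,\dots,\alpha_n)$ with $s\alpha_i=t\alpha_{i+1}$. A gentle quiver is $(\Delta,R)$ with $\Delta$ connected, $R$ a set of paths of length 2, such that: (1) each vertex is start of at most two arrows and end of at most two arrows; (2) for each arrow $\alpha$ at most one $\beta$ with $s\beta=t\alpha$, $(\beta,\alpha)\notin R$ and at most one $\gamma$ with $t\gamma=s\alpha$, $(\alpha,\gamma)\notin R$; (3) for each $\alpha$ at most one $\beta$ with $(\beta,\alpha)\in R$ and at most one $\gamma$ with $(\alpha,\gamma)\in R$; (4) for some $n$ every path of length $n$ has a subpath in $R$. An arrow $\alpha$ of the connected quiver $\Delta$ is a branch arrow if the quiver obtained by deleting $\alpha$ (keeping all vertices) is not connected; otherwise $\alpha$ is a cycle arrow. Invariant: fix $\sigma,\tau:\Delta_1\to\{\pm1\}$ with distinct arrows of same start having opposite $\sigma$, distinct arrows of same end opposite $\tau$, and for $s\alpha=t\beta$: $(\alpha,\beta)\in R$ iff $\sigma\alpha=\tau\beta$; $\sigma\omega=\sigma\alpha_n,\tau\omega=\tau\alpha_1$. Permitted paths: no consecutive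 pair in $R$, plus trivial $1_{x,\varepsilon}$ ($s=t=x$, $\sigma=\varepsilon,\tau=-\varepsilon$); maximal if no arrow $\alpha$ with $s\alpha=t\omega,\sigma\alpha=-\tau\omega$ and no $\beta$ with $t\beta=s\omega,\tau\beta=-\sigma\omega$; set $\mathcal M$. Antipaths: all consecutive pairs in $R$, plus trivial $1'_{x,\varepsilon}$ ($\sigma=\tau=\varepsilon$); maximal if no $\alpha$ with $s\alpha=t\omega,\sigma\alpha=\tau\omega$ and no $\beta$ with $t\beta=s\omega,\tau\beta=\sigma\omega$; set $\mathcal N$. $\phi:\mathcal M\to\mathcal N$, $\omega\mapsto$ unique $\omega'$ with $t\omega'=t\omega,\tau\omega'=-\tau\omega$; $\psi:\mathcal N\to\mathcal M$, $\omega\mapsto$ unique $\omega'$ with $s\omega'=s\omega,\sigma\omega'=-\sigma\omega$; $\Phi=\phi\psi$; $\Phi$-orbit: $p=|\mathcal O|$, $q=$ total length. $\mathcal C$: set of arrows $\alpha$ such that $(\alpha)$ is not a subpath of a maximal antipath; $\Psi(\alpha)=$ unique $\beta\in\mathcal C$ with $t\beta=s\alpha,\tau\beta=\sigma\alpha$; $\Psi$-orbit: $p=0$, $q=|\mathcal O|$. $f(p,q)=$ number of orbits with these values; $[p,q]$ the characteristic function of $\{(p,q)\}$; sums pointwise. *)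

From HB Require Import structures.
From mathcomp Require Import all_boot finmap.
From mathcomp Require Import boolp classical_sets cardinality.

Set Implicit Arguments.
Unset Strict Implicit.
Unset Printing Implicit Defensive.

Local Open Scope classical_set_scope.
Local Open Scope fset_scope.

Section GentleQuiver.
Variables (V A : finType) (s t : A -> V).

Definition is_qpath (l : seq A) : bool := sorted (fun a b => s a == t b) l.

Definition qadj (P : pred A) : rel V :=
  fun x y => [exists a, P a && (((s a == x) && (t a == y)) || ((s a == y) && (t a == x)))].

Definition connected_on (P : pred A) : Prop := forall x y : V, connect (qadj P) x y.

Definition qconnected : Prop := connected_on predT.

Definition branch_arrow (al : A) : Prop := ~ connected_on (predC1 al).
Definition cycle_arrow (al : A) : Prop := ~ branch_arrow al.

Variable R : rel A. (* R a b  <->  the length-2 path (a, b) (s a = t b) lies in R *)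

Definition contains_rel (l : seq A) : Prop :=
  exists l1 a b l2, l = l1 ++ a :: b :: l2 /\ R a b.

Definition gentle : Prop :=
  qconnected /\
  [/\ (forall a b, R a b -> s a = t b),
      (forall x, #|[pred a | s a == x]| <= 2 /\ #|[pred a | t a == x]| <= 2),
      (forall a,
        (forall b1 b2, s b1 = t a -> ~~ R b1 a -> s b2 = t a -> ~~ R b2 a -> b1 = b2) /\
        (forall c1 c2, t c1 = s a -> ~~ R a c1 -> t c2 = s a -> ~~ R a c2 -> c1 = c2)),
      (forall a,
        (forall b1 b2, R b1 a -> R b2 a -> b1 = b2) /\
        (forall c1 c2, R a c1 -> R a c2 -> c1 = c2)) &
      (exists n, 0 < n /\ forall l, size l = n -> is_qpath l -> contains_rel l)].

(** signs: true stands for +1, false for -1 *)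
Variables (sg tg : A -> bool).

Definition sign_data : Prop :=
  [/\ (forall a b, a != b -> s a = s b -> sg a != sg b),
      (forall a b, a != b -> t a = t b -> tg a != tg b) &
      (forall a b, s a = t b -> (R a b <-> sg a = tg b))].

(** generalized paths: [inl (a, l)] is the nontrivial path a :: l
    (a = alpha_1 is the arrow at the end, last a l = alpha_n at the start);
    [inr (x, e)] is the trivial path at x with parameter e: it is read as
    1_{x,e} for permitted paths and as 1'_{x,e} for antipaths. *)
Definition gpath := ((A * seq A) + (V * bool))%type.

Definition w_arrows (w : gpath) : seq A :=
  match w with inl (a, l) => a :: l | inr _ => [::] end.
Definition w_len (w : gpath) : nat := size (w_arrows w).
Definition w_s (w : gpath) : V :=
  match w with inl (a, l) => s (last a l) | inr (x, _) => x end.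
Definition w_t (w : gpath) : V :=
  match w with inl (a, _) => t a | inr (x, _) => x end.
Definition w_sg (w : gpath) : bool :=
  match w with inl (a, l) => sg (last a l) | inr (_, e) => e end.
(* tau of a permitted path (trivial: tau 1_{x,e} = -e) *)
Definition w_tgP (w : gpath) : bool :=
  match w with inl (a, _) => tg a | inr (_, e) => ~~ e end.
(* tau of an antipath (trivial: tau 1'_{x,e} = e) *)
Definition w_tgN (w : gpath) : bool :=
  match w with inl (a, _) => tg a | inr (_, e) => e end.

Definition permitted (w : gpath) : bool :=
  match w with
  | inl (a, l) => sorted (fun b c => (s b == t c) && ~~ R b c) (a :: l)
  | inr _ => true end.
Definition antipath (w : gpath) : bool :=
  match w with
  | inl (a, l) => sorted (fun b c => (s b == t c) && R b c) (a :: l)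
  | inr _ => true end.

Definition maxP (w : gpath) : bool :=
  [&& permitted w,
      ~~ [exists a, (s a == w_t w) && (sg a == ~~ w_tgP w)] &
      ~~ [exists b, (t b == w_s w) && (tg b == ~~ w_sg w)]].

Definition maxN (w : gpath) : bool :=
  [&& antipath w,
      ~~ [exists a, (s a == w_t w) && (sg a == w_tgN w)] &
      ~~ [exists b, (t b == w_s w) && (tg b == w_sg w)]].

(** phi : M -> N and psi : N -> M ("the unique ...", via choice) *)
Definition phi (w : gpath) : gpath :=
  xget w [set w' | maxN w' /\ w_t w' = w_t w /\ w_tgN w' = ~~ w_tgP w].
Definition psi (w : gpath) : gpath :=
  xget w [set w' | maxP w' /\ w_s w' = w_s w /\ w_sg w' = ~~ w_sg w].
Definition Phi (w : gpath) : gpath := phi (psi w).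

Definition inC (a : A) : Prop := ~ exists w, maxN w /\ a \in w_arrows w.

Definition Psi (a : A) : A := xget a [set b | inC b /\ t b = s a /\ tg b = sg a].

Definition orbit_of {T : Type} (f : T -> T) (x : T) : set T :=
  [set y | exists k, y = iter k f x].

Definition Phi_orbits : set (set gpath) :=
  [set O | exists w, maxN w /\ O = orbit_of Phi w].
Definition Psi_orbits : set (set A) :=
  [set O | exists a, inC a /\ O = orbit_of Psi a].

Definition Phi_pq (O : set gpath) : nat * nat :=
  (#|` fset_set O|, \sum_(w <- fset_set O) w_len w)%N.
Definition Psi_pq (O : set A) : nat * nat := (0, #|` fset_set O|)%N.

Definition AGinv (p q : nat) : nat :=
  (#|` fset_set [set O | Phi_orbits O /\ Phi_pq O = (p, q)]|
   + #|` fset_set [set O | Psi_orbits O /\ Psi_pq O = (p, q)]|)%N.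

End GentleQuiver.

(* Maximal antipaths are determined by their terminal data (t w, tau w); these
   are exactly the 2|V| - |A| pairs (x, e) that are not the start data
   (s a, sigma a) of an arrow, and every arrow outside C lies on exactly one
   of them.  On C the map Psi is a permutation following the relations, so
   consecutive arrows of a Psi-orbit share a vertex.  The hypothesis on f
   says that there is a single Phi-orbit, so |N| = p + m + 2 and
   |A \ C| = p, and that the r Psi-orbits are 3-cycles with r <= m.
   An arrow of C is a cycle arrow since the rest of its Psi-orbit joins its
   ends.  If an arrow a outside C were a cycle arrow, deleting a and one arrow
   of each Psi-orbit would keep the quiver connected, with |A| - r - 1 arrows
   on |V| = (|A| + p + m + 2) / 2 vertices; as |A| = p + 3 r this forces
   r >= m + 2. *)

From mathcomp Require Import all_boot finmap.
From mathcomp Require Import boolp classical_sets cardinality.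
From mathcomp Require Import zify.

Set Implicit Arguments.
Unset Strict Implicit.
Unset Printing Implicit Defensive.

Section FiniteCounting.
Local Open Scope fset_scope.

Lemma card_le_of_rel (T U : finType) (D : {pred T}) (B : {pred U})
    (P : T -> U -> bool) :
  (forall x, x \in D -> exists2 b, b \in B & P x b) ->
  (forall x y b, x \in D -> y \in D -> P x b -> P y b -> x = y) ->
  #|D| <= #|B|.
Proof.
move=> exP uniqP; pose f x := [pick b in B | P x b].
have fD x : x \in D -> exists2 b, b \in B & f x = Some b.
  move=> Dx; rewrite /f; case: pickP => [b /andP [Bb _]|none]; first by exists b.
  by have [b Bb Pxb] := exP x Dx; have := none b; rewrite Bb Pxb.
have fP x b : f x = Some b -> P x b.
  by rewrite /f; case: pickP => // c /andP [_ Pxc] [<-].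
have f_inj : {in D &, injective f}.
  move=> x y Dx Dy fxy; have [b _ fxb] := fD x Dx.
  by apply: (uniqP x y b) => //; apply: fP; rewrite // -fxy.
rewrite -(card_in_imset f_inj) -(card_imset B (@Some_inj _)).
apply: subset_leq_card; apply/fintype.subsetP => _ /imsetP [x Dx ->].
by have [b Bb ->] := fD x Dx; apply: imset_f.
Qed.

Lemma sum_size_disjoint (I : eqType) (T : finType) (r : seq I) (f : I -> seq T) :
  uniq r -> {in r, forall i, uniq (f i)} ->
  {in r &, forall i j x, x \in f i -> x \in f j -> i = j} ->
  \sum_(i <- r) size (f i) = #|[pred x | has (fun i => x \in f i) r]|.
Proof.
move=> r_uniq f_uniq f_disj.
have flat_uniq : uniq (flatten [seq f i | i <- r]).
  elim: r r_uniq f_uniq f_disj => [|i r IHr] //= /andP [ir r_uniq] f_uniq f_disj.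
  rewrite cat_uniq f_uniq ?mem_head // IHr //; last 2 first.
  - by move=> j rj; apply: f_uniq; rewrite inE rj orbT.
  - by move=> j k rj rk; apply: f_disj; rewrite inE ?rj ?rk orbT.
  rewrite andbT; apply/hasP => -[x /flatten_mapP [j rj xj] xi].
  by move: ir; rewrite (f_disj i j _ _ x xi xj) ?mem_head ?inE ?rj ?orbT.
have -> : \sum_(i <- r) size (f i) = size (flatten [seq f i | i <- r]).
  by rewrite size_flatten /shape -map_comp sumnE big_map.
rewrite -(card_uniqP flat_uniq).
by apply: eq_card => x; rewrite !inE; apply/flatten_mapP/hasP => -[i ri xi]; exists i.
Qed.

Lemma card_fset_set_pred (T : finType) (P : pred T) :
  #|` fset_set [set x | P x]%classic| = #|P|.
Proof.
rewrite -card_finset; congr #|` _|; apply/fsetP => x.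
rewrite in_fset_set; last exact: finite_finset.
by apply/idP/idP => [/set_mem|]; rewrite in_fset // => /mem_set.
Qed.

Lemma card_fset_set_gt0 (T : choiceType) (S : set T) x :
  finite_set S -> S x -> 0 < #|` fset_set S|.
Proof.
move=> finS Sx; rewrite cardfs_gt0; apply/fset0Pn; exists x.
by rewrite in_fset_set ?inE.
Qed.

Lemma card_fset_set_le1 (T : choiceType) (S : set T) x y :
  finite_set S -> S x -> S y -> #|` fset_set S| <= 1 -> x = y.
Proof.
move=> finS Sx Sy; apply: contraTeq => xy; rewrite -ltnNge.
have /fsubset_leq_card : [fset x; y] `<=` fset_set S.
  by rewrite fsubUset !fsub1set !in_fset_set //; apply/andP; split; apply: mem_set.
by rewrite cardfs2 xy.
Qed.

End FiniteCounting.

Section Walks.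
Variables (T : finType) (e : rel T).

Lemma det_path_eq x l1 l2 :
  (forall y z z', e y z -> e y z' -> z = z') ->
  path e x l1 -> path e x l2 ->
  ~~ [exists z, e (last x l1) z] -> ~~ [exists z, e (last x l2) z] -> l1 = l2.
Proof.
move=> succ_uniq; elim: l1 x l2 => [|y1 l1 IHl] x [|y2 l2] //=.
- by move=> _ /andP [exy _] /existsPn /(_ y2); rewrite exy.
- by move=> /andP [exy _] _ _ /existsPn /(_ y1); rewrite exy.
move=> /andP [exy1 p1] /andP [exy2 p2] sink1 sink2.
have y12 := succ_uniq _ _ _ exy1 exy2; subst y2.
by rewrite (IHl _ _ p1 p2 sink1 sink2).
Qed.

Hypothesis pred_uniq : forall x x' y, e x y -> e x' y -> x = x'.

Lemma source_path_uniq x l :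
  path e x l -> ~~ [exists z, e z x] -> uniq (x :: l).
Proof.
move=> + src; elim/last_ind: l => [|l z IHl] // /[!rcons_path] /andP [pl ez].
rewrite -rcons_cons rcons_uniq IHl // andbT; apply/negP.
rewrite inE => /orP [/eqP zx | zl].
  by subst z; move/existsPn: src => /(_ (last x l)); rewrite ez.
case/splitPr: zl pl ez (IHl pl) => l1 l2.
rewrite cat_path last_cat => /andP [_ /andP [ez' _]] /= ez.
change (uniq ((x :: l1) ++ z :: l2) -> False).
rewrite cat_uniq => /and3P [_ /hasPn /(_ (last z l2) (mem_last _ _)) + _].
by rewrite -(pred_uniq ez' ez) mem_last.
Qed.

Lemma source_path_inj x y p q :
  path e x p -> path e y q -> last x p = last y q ->
  ~~ [exists z, e z x] -> ~~ [exists z, e z y] -> x = y.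
Proof.
elim/last_ind: p q => [|p z1 IHp] q; case/lastP: q => [|q z2] //=;
  rewrite ?rcons_path ?last_rcons.
- by move=> _ /andP [_ ez] -> /existsPn /(_ (last y q)); rewrite ez.
- by move=> /andP [_ ez] _ <- _ /existsPn /(_ (last x p)); rewrite ez.
move=> /andP [pp ez1] /andP [pq ez2] z12; subst z2.
exact: IHp pp pq (pred_uniq ez1 ez2).
Qed.

Lemma sink_path_exists x :
  ~~ [exists z, e z x] -> exists2 l, path e x l & ~~ [exists z, e (last x l) z].
Proof.
move=> src; pose reach k := [exists l : k.-tuple T, path e x l].
have reach_le k : reach k -> k <= #|T|.
  case/existsP => l /source_path_uniq /(_ src) /card_uniqP.
  by rewrite /= size_tuple => card_l; apply: ltnW; rewrite -card_l max_card.
have reach0 : exists k, reach k by exists 0; apply/existsP; exists [tuple].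
case: (ex_maxnP reach0 reach_le) => k /existsP [l pl] k_max.
exists l => //; apply/existsP => -[z ez].
suff : k.+1 <= k by rewrite ltnn.
by apply: k_max; apply/existsP; exists [tuple of rcons l z]; rewrite rcons_path pl ez.
Qed.

End Walks.

Lemma last_rev_belast (T : Type) (x : T) l : last (last x l) (rev (belast x l)) = x.
Proof. by case: l => [|y l] //=; rewrite rev_cons last_rcons. Qed.

Section Orbits.
Variables (T : finType) (f : T -> T).

Lemma orbit_ofE x : orbit_of f x = [set y | fconnect f x y]%classic.
Proof.
apply/seteqP; split => y /=; first by move=> [k ->]; apply: fconnect_iter.
by move=> xy; exists (findex f x y); rewrite iter_findex.
Qed.

Lemma iter_neq_order i x : 0 < i < order f x -> iter i f x != x.
Proof.
case/andP => i_gt0 lt_i; apply: contraTneq i_gt0 => fix_x.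
by rewrite -(findex_iter lt_i) fix_x findex0.
Qed.

Lemma card_orbit_of x : #|` fset_set (orbit_of f x)| = order f x.
Proof. by rewrite orbit_ofE card_fset_set_pred. Qed.

End Orbits.

Section Distance.
Variables (T : finType) (e : rel T) (x0 : T).
Hypothesis to_x0 : forall y, connect e y x0.

Lemma reach_x0 y : exists k, [exists p : k.-tuple T, path e y p && (last y p == x0)].
Proof.
case/connectP: (to_x0 y) => p yp lp; exists (size p).
by apply/existsP; exists (in_tuple p); rewrite yp -lp eqxx.
Qed.

Definition dist y := ex_minn (reach_x0 y).

Lemma dist_descent y : y != x0 -> exists2 z, e y z & dist z < dist y.
Proof.
rewrite /dist; case: ex_minnP => k /existsP [[[|z p] /= /eqP size_p]] //.
  by move=> /eqP -> _; rewrite eqxx.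
case/andP => /andP [eyz zp] lp _ _; exists z => //.
case: ex_minnP => kz _ kz_min; rewrite -size_p ltnS; apply: kz_min.
by apply/existsP; exists (in_tuple p); rewrite zp lp.
Qed.

End Distance.

Section QuiverGraph.
Variables (V A : finType) (s t : A -> V).

Lemma qadj_sym (P : pred A) : symmetric (qadj s t P).
Proof. by move=> x y; apply: eq_existsb => a; congr (_ && _); exact: orbC. Qed.

Lemma connected_on_bypass (P Q : pred A) : connected_on s t P ->
  (forall a, P a -> ~~ Q a -> connect (qadj s t Q) (s a) (t a)) ->
  connected_on s t Q.
Proof.
move=> conP bypass x y; apply: connect_sub (conP x y) => u v /existsP [a /andP [Pa uv]].
have Q_sym := sym_connect_sym (qadj_sym Q).
case: (boolP (Q a)) => Qa.
  by apply: connect1; apply/existsP; exists a; rewrite Qa.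
have := bypass a Pa Qa.
by case/orP: uv => /andP [/eqP <- /eqP <-] //; rewrite Q_sym.
Qed.

(* Every vertex but x0 gets the arrow leading to a neighbour closer to x0. *)
Lemma card_le_connected (Q : pred A) : connected_on s t Q -> #|V| <= #|Q| + 1.
Proof.
move=> conQ; case: (pickP (@predT V)) => [x0 _ | V0]; last by rewrite (eq_card0 V0).
have to_x0 y : connect (qadj s t Q) y x0 := conQ y x0.
pose d := dist to_x0.
pose parent y a := Q a &&
  (((s a == y) && (d (t a) < d y)) || ((t a == y) && (d (s a) < d y))).
have : #|predC1 x0| <= #|Q|.
  apply: (card_le_of_rel (P := parent)) => [y|y1 y2 a _ _].
    rewrite !inE => /(dist_descent to_x0) [z /existsP [a /andP [Qa yz]] dz].
    exists a => //; rewrite /parent Qa.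
    by case/orP: yz => /andP [/eqP -> /eqP ->]; rewrite dz eqxx ?orbT.
  case/andP => _ /orP [] /andP [/eqP <- l1];
  case/andP => _ /orP [] /andP [/eqP <- l2] //;
  by have := ltn_trans l1 l2; rewrite ltnn.
have : 0 < #|V| by apply/card_gt0P; exists x0.
rewrite cardC1; lia.
Qed.

End QuiverGraph.

Section GentleInvariant.
Variables (V A : finType) (s t : A -> V) (R : rel A) (sg tg : A -> bool).
Hypothesis R_st : forall a b, R a b -> s a = t b.
Hypothesis R_pred_uniq : forall a a' b, R a b -> R a' b -> a = a'.
Hypothesis R_succ_uniq : forall a b b', R a b -> R a b' -> b = b'.
Hypothesis sg_inj : forall a b, a != b -> s a = s b -> sg a != sg b.
Hypothesis tg_inj : forall a b, a != b -> t a = t b -> tg a != tg b.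
Hypothesis R_sign : forall a b, s a = t b -> (R a b <-> sg a = tg b).

Local Notation N := (maxN s t R sg tg).

(* A maximal antipath is determined by its terminal data, which must be a
   pair (x, e) not of the form (s a, sg a). *)
Definition term (w : gpath V A) : V * bool := (w_t t w, w_tgN tg w).
Definition vacant (x : V * bool) : bool :=
  ~~ [exists a, (s a == x.1) && (sg a == x.2)].

Lemma card_vacant_arrows : #|vacant| + #|A| = 2 * #|V|.
Proof.
pose start a := (s a, sg a).
have start_inj : injective start.
  move=> a b [sab sgab]; case: (eqVneq a b) => // ab.
  by have := sg_inj ab sab; rewrite sgab eqxx.
have -> : #|vacant| = #|[predC codom start]|.
  apply: eq_card => -[x e]; rewrite !inE /vacant /=; congr (~~ _).
  apply/existsP/codomP => [[a /andP [/eqP sa /eqP sga]] | [a [-> ->]]].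
    by exists a; rewrite /start sa sga.
  by exists a; rewrite !eqxx.
by rewrite -(card_codom start_inj) addnC cardC card_prod card_bool mulnC.
Qed.

Lemma antipath_pathE h l :
  path (fun b c => (s b == t c) && R b c) h l = path R h l.
Proof.
apply: eq_path => b c; case: (boolP (R b c)) => Rbc; last by rewrite andbF.
by rewrite (R_st Rbc) eqxx.
Qed.

Lemma has_R_pred h :
  [exists a, (s a == t h) && (sg a == tg h)] = [exists a, R a h].
Proof.
apply: eq_existsb => a; apply/andP/idP => [[/eqP sah /eqP]|Rah].
  by move/(R_sign sah).
by rewrite (R_st Rah); split => //; apply/eqP/(R_sign (R_st Rah)).
Qed.

Lemma has_R_succ h :
  [exists b, (t b == s h) && (tg b == sg h)] = [exists b, R h b].
Proof.
apply: eq_existsb => b; apply/andP/idP => [[/eqP tbh /eqP]|Rhb].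
  by move/esym/(R_sign (esym tbh)).
by rewrite (R_st Rhb); split => //; apply/eqP/esym/(R_sign (R_st Rhb)).
Qed.

Lemma maxN_arrowsE h l : N (inl (h, l)) =
  [&& path R h l, ~~ [exists a, R a h] & ~~ [exists b, R (last h l) b]].
Proof. by rewrite /maxN /= antipath_pathE has_R_pred has_R_succ. Qed.

Lemma maxN_vacant w : N w -> vacant (term w).
Proof. by case/and3P. Qed.

Lemma maxN_term_inj w1 w2 : N w1 -> N w2 -> term w1 = term w2 -> w1 = w2.
Proof.
case: w1 => [[h1 l1]|[x1 e1]]; case: w2 => [[h2 l2]|[x2 e2]] //=.
- rewrite !maxN_arrowsE /term /= => /and3P [p1 _ sink1] /and3P [p2 _ sink2] [th tgh].
  have h12 : h1 = h2.
    by case: (eqVneq h1 h2) => // h12; have := tg_inj h12 th; rewrite tgh eqxx.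
  by subst h2; rewrite (det_path_eq R_succ_uniq p1 p2 sink1 sink2).
- move=> _ /and3P [_ _ /existsPn /(_ h1)]; rewrite /term /= => + [th tgh].
  by rewrite th tgh !eqxx.
- move=> /and3P [_ _ /existsPn /(_ h2)]; rewrite /term /= => + _ [th tgh].
  by rewrite -th -tgh !eqxx.
by move=> _ _ [-> ->].
Qed.

Lemma vacant_term x : vacant x -> exists2 w, N w & term w = x.
Proof.
case: x => x e vac.
case: (pickP (fun b => (t b == x) && (tg b == e))) => [b /andP [/eqP tb /eqP tgb]|none].
  have src : ~~ [exists a, R a b].
    by rewrite -has_R_pred tb tgb.
  have [l pl sink] := sink_path_exists R_pred_uniq src.
  by exists (inl (b, l)); rewrite ?maxN_arrowsE ?pl ?src // /term /= tb tgb.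
exists (inr (x, e)) => //; apply/and3P; split => //.
by apply/existsPn => b; rewrite none.
Qed.

Lemma maxN_arrows_uniq w : N w -> uniq (w_arrows w).
Proof.
case: w => [[h l]|//]; rewrite maxN_arrowsE => /and3P [pl src _].
exact: (source_path_uniq R_pred_uniq pl src).
Qed.

Lemma maxN_arrows_disjoint w1 w2 a : N w1 -> N w2 ->
  a \in w_arrows w1 -> a \in w_arrows w2 -> w1 = w2.
Proof.
case: w1 => [[h1 l1]|//]; case: w2 => [[h2 l2]|//] N1 N2 /= a1 a2.
move: (N1) (N2); rewrite !maxN_arrowsE => /and3P [pl1 src1 _] /and3P [pl2 src2 _].
have h12 : h1 = h2.
  case/splitPl: a1 pl1 => p1 q1 lp1 /[!cat_path] /andP [pp1 _].
  case/splitPl: a2 pl2 => p2 q2 lp2 /[!cat_path] /andP [pp2 _].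
  exact: (source_path_inj R_pred_uniq pp1 pp2 (etrans lp1 (esym lp2)) src1 src2).
by apply: maxN_term_inj => //; rewrite /term /= h12.
Qed.

Lemma maxN_arrows_R w x b : N w -> R x b ->
  (x \in w_arrows w) = (b \in w_arrows w).
Proof.
case: w => [[h l]|//] /=; rewrite maxN_arrowsE => /and3P [pl src sink] Rxb.
apply/idP/idP => [xl | bl].
  case/splitPl: xl pl sink => p [|c q] lp /[!cat_path] /andP [_].
    by rewrite cats0 lp => _ /existsPn /(_ b); rewrite Rxb.
  rewrite lp /= => /andP [Rxc _] _; rewrite (R_succ_uniq Rxc Rxb).
  by rewrite inE mem_cat inE eqxx !orbT.
case/splitPl: bl pl src => p q; case/lastP: p => [|p z] /=.
  by move=> -> _ /existsPn /(_ x); rewrite Rxb.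
rewrite last_rcons => zb /[!cat_path] /andP [+ _] _.
rewrite rcons_path zb => /andP [_ Rzb]; rewrite -(R_pred_uniq Rzb Rxb).
by rewrite -cat_cons mem_cat -rcons_cons mem_rcons inE mem_last orbT.
Qed.

Local Notation C := (inC s t R sg tg).
Local Notation Psi := (Psi s t R sg tg).

Lemma C_R_iff x b : R x b -> C x <-> C b.
Proof.
move=> Rxb; split=> Cx [w [Nw arr_w]]; apply: Cx; exists w; split => //.
  by rewrite (maxN_arrows_R Nw Rxb).
by rewrite -(maxN_arrows_R Nw Rxb).
Qed.

(* Otherwise the backward R-walk from x ends at a source and, reversed,
   yields a maximal antipath through x. *)
Lemma C_R_succ x : C x -> exists b, R x b.
Proof.
move=> Cx; apply: contrapT => no_succ; apply: Cx.
have src : ~~ [exists z, R x z].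
  by apply/existsP => -[z Rxz]; apply: no_succ; exists z.
have [l pl sink] := sink_path_exists (e := fun a b => R b a)
  (fun a a' b Rba Rba' => R_succ_uniq Rba Rba') src.
exists (inl (last x l, rev (belast x l))); split; last first.
  by rewrite /= -rev_rcons -lastI mem_rev mem_head.
by rewrite maxN_arrowsE rev_path pl sink last_rev_belast src.
Qed.

Lemma Psi_R x : C x -> R x (Psi x).
Proof.
move=> Cx; have [b Rxb] := C_R_succ Cx.
suff -> : Psi x = b by [].
apply: xget_unique.
  split; first exact: (C_R_iff Rxb).1.
  by rewrite (R_st Rxb); split => //; apply/esym/(R_sign (R_st Rxb)).
move=> y [_ [tyx tgy]]; apply: R_succ_uniq Rxb.
by apply/(R_sign (esym tyx)); rewrite tgy.
Qed.

Lemma C_Psi x : C x -> C (Psi x).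
Proof. by move=> Cx; apply: (C_R_iff (Psi_R Cx)).1. Qed.

Lemma Psi_notC x : ~ C x -> Psi x = x.
Proof.
move=> nCx; apply: xgetPN => y [Cy [tyx tgy]]; apply: nCx.
have Rxy : R x y by apply/(R_sign (esym tyx)); rewrite tgy.
exact: (C_R_iff Rxy).2.
Qed.

Lemma Psi_inj : injective Psi.
Proof.
move=> x y; have [Cx|nCx] := pselect (C x); have [Cy|nCy] := pselect (C y).
- by move=> Psi_xy; apply: R_pred_uniq (Psi_R Cx) _; rewrite Psi_xy Psi_R.
- by rewrite (Psi_notC nCy) => Psi_x; have := C_Psi Cx; rewrite Psi_x.
- by rewrite (Psi_notC nCx) => Psi_y; have := C_Psi Cy; rewrite -Psi_y.
by rewrite (Psi_notC nCx) (Psi_notC nCy).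
Qed.

Lemma C_iter_Psi k x : C x -> C (iter k Psi x).
Proof. by move=> Cx; elim: k => //= k; apply: C_Psi. Qed.

Local Notation phi := (phi s t R sg tg).
Local Notation Phi := (Phi s t R sg tg).

(* For w in M the terminal data (t w, - tau w) is vacant because w cannot be
   extended at its end; for w in N, xget may fall back to w itself. *)
Lemma phi_maxN w : N w \/ maxP s t R sg tg w -> N (phi w).
Proof.
rewrite /phi; case: xgetP => [w' _ [] //|none [//|/and3P [_ vac _]]].
have [w' Nw' [tw' tgw']] := vacant_term (x := (w_t t w, ~~ w_tgP tg w)) vac.
by case: (none w').
Qed.

Lemma Phi_maxN w : N w -> N (Phi w).
Proof.
move=> Nw; apply: phi_maxN; rewrite /psi.
by case: xgetP => [w' _ [] | _]; [right | left].
Qed.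

Definition Nset : set (gpath V A) := [set w | N w]%classic.

Lemma in_Nset w : (w \in Nset) = N w.
Proof. by apply/idP/idP => [/set_mem | /mem_set]. Qed.

Lemma finite_Nset : finite_set Nset.
Proof.
pose mk x := xget (inr x) [set w | N w /\ term w = x]%classic.
apply: (@sub_finite_set _ _ (mk @` setT)%classic); last first.
  exact/finite_image/finite_finset.
move=> w Nw; exists (term w) => //; apply: xget_unique => // w' [Nw' tw'].
exact: maxN_term_inj.
Qed.

Lemma in_fset_Nset w : (w \in fset_set Nset) = N w.
Proof. by rewrite in_fset_set ?in_Nset //; exact: finite_Nset. Qed.

Lemma card_Nset : #|` fset_set Nset| = #|vacant|.
Proof.
rewrite -card_fset_set_pred.
have -> : [set x | vacant x]%classic = (term @` Nset)%classic.
  apply/seteqP; split => [x /= /vacant_term [w Nw <-] | _ [w Nw <-]]; first by exists w.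
  exact: maxN_vacant.
rewrite fset_set_image; last exact: finite_Nset.
apply/esym/eqP/card_in_imfsetP => w1 w2; rewrite !in_fset_Nset; exact: maxN_term_inj.
Qed.

Lemma sum_len_Nset :
  \sum_(w <- fset_set Nset) w_len w = #|[pred a | ~~ `[< C a >]]|.
Proof.
rewrite (sum_size_disjoint (f := @w_arrows V A)) ?fset_uniq //; first last.
- move=> w1 w2; rewrite !in_fset_Nset => N1 N2 x.
  exact: (maxN_arrows_disjoint N1 N2).
- by move=> w; rewrite in_fset_Nset; exact: maxN_arrows_uniq.
apply: eq_card => a; rewrite !inE; apply/hasP/asboolPn => [[w] | /contrapT [w [Nw aw]]].
  by rewrite in_fset_Nset => Nw aw []; exists w.
by exists w; rewrite ?in_fset_Nset.
Qed.

(* Consecutive arrows of a Psi-orbit share a vertex, so the other arrows of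
   the orbit of r lead from s r around to t r. *)
Lemma connect_along_Psi_orbit r (Q : pred A) : C r ->
  (forall i, 0 < i < order Psi r -> Q (iter i Psi r)) ->
  connect (qadj s t Q) (s r) (t r).
Proof.
move=> Cr Q_orbit.
have step i : s (iter i Psi r) = t (iter i.+1 Psi r).
  exact: R_st (Psi_R (C_iter_Psi (k := i) Cr)).
have reach i : i < order Psi r -> connect (qadj s t Q) (s r) (s (iter i Psi r)).
  elim: i => [|i IHi] lt_i //; apply: connect_trans (IHi (ltnW lt_i)) (connect1 _).
  by apply/existsP; exists (iter i.+1 Psi r); rewrite Q_orbit // -step !eqxx orbT.
have <- : s (iter (order Psi r).-1 Psi r) = t r.
  by rewrite step prednK ?order_gt0 // (iter_order Psi_inj).
by apply: reach; rewrite ltn_predL order_gt0.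
Qed.

Lemma C_connected_predC1 a : qconnected s t -> C a -> connected_on s t (predC1 a).
Proof.
move=> conn Ca; apply: (connected_on_bypass conn) => b _; rewrite negbK => /eqP ->.
by apply: connect_along_Psi_orbit => // i /iter_neq_order.
Qed.

Definition Phi_class a b :=
  [set O | Phi_orbits s t R sg tg O /\ Phi_pq O = (a, b)]%classic.
Definition Psi_class a b :=
  [set O | Psi_orbits s t R sg tg O /\ Psi_pq O = (a, b)]%classic.

Lemma AGinvE a b : AGinv s t R sg tg a b =
  #|` fset_set (Phi_class a b)| + #|` fset_set (Psi_class a b)|.
Proof. by []. Qed.

Lemma orbit_Phi_maxN w : N w -> (orbit_of Phi w `<=` Nset)%classic.
Proof. by move=> Nw _ [k ->]; elim: k => //= k; apply: Phi_maxN. Qed.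

Lemma finite_Phi_class a b : finite_set (Phi_class a b).
Proof.
apply: (@sub_finite_set _ _ (orbit_of Phi @` Nset)%classic).
  by move=> O [[w [Nw ->]] _]; exists w.
exact/finite_image/finite_Nset.
Qed.

Lemma finite_Psi_class a b : finite_set (Psi_class a b).
Proof.
apply: (@sub_finite_set _ _ (orbit_of Psi @` setT)%classic).
  by move=> O [[x [_ ->]] _]; exists x.
exact/finite_image/finite_finset.
Qed.

Lemma Phi_pq_orbit_gt0 w : N w -> 0 < (Phi_pq (orbit_of Phi w)).1.
Proof.
move=> Nw; apply: (card_fset_set_gt0 (x := w)); last by exists 0.
exact: sub_finite_set (orbit_Phi_maxN Nw) finite_Nset.
Qed.

Lemma Phi_orbit_AGinv_gt0 w : N w ->
  0 < AGinv s t R sg tg (Phi_pq (orbit_of Phi w)).1 (Phi_pq (orbit_of Phi w)).2.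
Proof.
move=> Nw; rewrite AGinvE ltn_addr //.
apply: (card_fset_set_gt0 (x := orbit_of Phi w) (finite_Phi_class _ _)).
by split; [exists w | case: (Phi_pq _)].
Qed.

Lemma Psi_orbit_AGinv_gt0 a : C a -> 0 < AGinv s t R sg tg 0 (order Psi a).
Proof.
move=> Ca; rewrite AGinvE ltn_addl //.
apply: (card_fset_set_gt0 (x := orbit_of Psi a) (finite_Psi_class _ _)).
by split; [exists a | rewrite /Psi_pq card_orbit_of].
Qed.

Variables (m p : nat).
Hypothesis AGinv_eq : forall a b : nat, AGinv s t R sg tg a b =
  m * ((a == 0) && (b == 3)) + ((a == p + m + 2) && (b == p)).

Lemma Phi_orbit_pq w : N w -> Phi_pq (orbit_of Phi w) = (p + m + 2, p).
Proof.
move=> Nw; move: (Phi_pq_orbit_gt0 Nw) (Phi_orbit_AGinv_gt0 Nw).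
case: (Phi_pq _) => x y /= x_gt0.
rewrite AGinv_eq (gtn_eqF x_gt0) muln0 add0n.
by case: eqP => // ->; case: eqP => // ->.
Qed.

Lemma order_Psi_C a : C a -> order Psi a = 3.
Proof.
move/Psi_orbit_AGinv_gt0; rewrite AGinv_eq addn2 /= addn0.
by case: eqP; rewrite ?muln0.
Qed.

Lemma maxN_exists : exists w, N w.
Proof.
have := AGinv_eq (p + m + 2) p; rewrite AGinvE !eqxx addn2 /= muln0 add0n.
have -> : Psi_class (p + m).+2 p = set0.
  by apply/seteqP; split => // O [_ []].
rewrite fset_set0 cardfs0 addn0 => card1.
have : 0 < #|` fset_set (Phi_class (p + m).+2 p)| by rewrite card1.
rewrite cardfs_gt0 => /fset0Pn [O]; rewrite in_fset_set; last exact: finite_Phi_class.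
by move=> /set_mem [[w [Nw _]] _]; exists w.
Qed.

(* The hypothesis leaves room for a single Phi-orbit, which therefore is all
   of N. *)
Lemma Nset_orbit w0 : N w0 -> Nset = orbit_of Phi w0.
Proof.
move=> N0; apply/seteqP; split; last exact: orbit_Phi_maxN.
move=> w Nw; suff <- : orbit_of Phi w = orbit_of Phi w0 by exists 0.
apply: (card_fset_set_le1 (finite_Phi_class (p + m + 2) p)).
- by split; [exists w | exact: Phi_orbit_pq].
- by split; [exists w0 | exact: Phi_orbit_pq].
have := AGinv_eq (p + m + 2) p; rewrite AGinvE !eqxx addn2 /= muln0 add0n.
by move=> card1; rewrite -card1 leq_addr.
Qed.

Lemma card_vacant_eq : #|vacant| = p + m + 2.
Proof.
have [w0 N0] := maxN_exists.
by rewrite -card_Nset (Nset_orbit N0); case: (Phi_orbit_pq N0).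
Qed.

Lemma card_notC_eq : #|[pred a | ~~ `[< C a >]]| = p.
Proof.
have [w0 N0] := maxN_exists.
by rewrite -sum_len_Nset (Nset_orbit N0); case: (Phi_orbit_pq N0).
Qed.

Definition C_roots : pred A := [pred r | `[< C r >] && (froot Psi r == r)].

Lemma card_C_eq : #|[pred a | `[< C a >]]| = 3 * #|C_roots|.
Proof.
rewrite -(fcard_order_set Psi_inj (n := 3) (a := [pred a | `[< C a >]])).
- by rewrite mulnC; congr (_ * _); apply: eq_card => r; rewrite !inE andbC.
- by apply/fintype.subsetP => r; rewrite !inE => Cr; rewrite (order_Psi_C Cr).
move=> x _ /eqP <-; rewrite !inE.
have [Cx|nCx] := pselect (C x); last by rewrite Psi_notC.
by rewrite !asboolT //; exact: C_Psi.
Qed.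

Lemma card_Psi_class_0_3 : #|` fset_set (Psi_class 0 3)| = m.
Proof.
have := AGinv_eq 0 3; rewrite AGinvE addn2 /= muln1 addn0.
suff -> : Phi_class 0 3 = set0 by rewrite fset_set0 cardfs0.
by apply/seteqP; split => // O [[w [Nw ->]]]; rewrite Phi_orbit_pq // addn2.
Qed.

Lemma card_C_roots_le : #|C_roots| <= m.
Proof.
have fin_roots : finite_set [set r | C_roots r]%classic by exact: finite_finset.
rewrite -card_Psi_class_0_3 -card_fset_set_pred.
have -> : #|` fset_set [set r | C_roots r]%classic| =
          #|` fset_set (orbit_of Psi @` [set r | C_roots r])%classic|.
  rewrite fset_set_image //; apply/esym/eqP/card_in_imfsetP => r1 r2.
  rewrite !in_fset_set // => /set_mem/andP [_ /eqP root1] /set_mem/andP [_ /eqP root2].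
  move=> orbit12; have : orbit_of Psi r1 r2 by rewrite orbit12; exists 0.
  rewrite orbit_ofE /= => /(rootP (fconnect_sym Psi_inj)).
  by rewrite root1 root2.
apply: fsubset_leq_card; rewrite -fset_set_sub; first last.
- exact: finite_Psi_class.
- exact: finite_image.
move=> O [r /andP [/asboolP Cr _] <-]; split; first by exists r.
by rewrite /Psi_pq card_orbit_of order_Psi_C.
Qed.

(* Deleting a together with one arrow from each Psi-orbit would still leave a
   connected quiver, which has too few arrows for its vertices. *)
Lemma notC_branch_arrow a : ~ C a -> branch_arrow s t a.
Proof.
move=> nCa conn_a.
pose Q := [pred b | (b != a) && ~~ C_roots b].
have conQ : connected_on s t Q.
  apply: (connected_on_bypass conn_a) => r /= ra; rewrite ra negbK.
  case/andP => /asboolP Cr /eqP root_r.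
  apply: connect_along_Psi_orbit => // i lt_i; apply/andP; split.
    by apply: contra_not_neq nCa => <-; apply: C_iter_Psi.
  apply/negP => /andP [_ /eqP root_i].
  have /(rootP (fconnect_sym Psi_inj)) := fconnect_iter Psi i r.
  by rewrite root_r root_i => /esym/eqP; apply/negP/iter_neq_order.
have card_A : #|A| = #|C_roots| + #|Q| + 1.
  rewrite -(cardC C_roots) (cardD1 a [predC C_roots]) addn1 -addnS.
  have -> : a \in [predC C_roots] by rewrite !inE; apply/negP => /andP [/asboolP].
  by congr (_ + _.+1); apply: eq_card => b; rewrite !inE andbC.
have card_CA : #|[pred b | ~~ `[< C b >]]| + #|[pred b | `[< C b >]]| = #|A|.
  by rewrite addnC -(cardC [pred b | `[< C b >]]).
have := card_le_connected conQ; have := card_vacant_arrows; have := card_C_roots_le.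
rewrite card_vacant_eq; rewrite card_notC_eq card_C_eq in card_CA.
by move: card_A card_CA; move: #|A| #|V| #|Q| #|C_roots|; lia.
Qed.

End GentleInvariant.

Theorem lemma6p3 (V A : finType) (s t : A -> V) (R : rel A) (sg tg : A -> bool)
    (m p : nat) :
  gentle s t R ->
  sign_data s t R sg tg ->
  (forall a b : nat,
      AGinv s t R sg tg a b
      = (m * ((a == 0) && (b == 3)) + ((a == p + m + 2) && (b == p)))%N) ->
  forall al : A,
    (branch_arrow s t al <-> ~ inC s t R sg tg al) /\
    (cycle_arrow s t al <-> inC s t R sg tg al).
Proof.
move=> [conn [R_st _ _ R_uniq _]] [sg_inj tg_inj R_sign] AGinv_eq al.
have R_pred_uniq a a' b : R a b -> R a' b -> a = a' := (R_uniq b).1 a a'.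
have R_succ_uniq a b b' : R a b -> R a b' -> b = b' := (R_uniq a).2 b b'.
have C_cycle : inC s t R sg tg al -> cycle_arrow s t al.
  move=> Cal; apply.
  exact: (C_connected_predC1 R_st R_pred_uniq R_succ_uniq R_sign conn Cal).
have notC_branch : ~ inC s t R sg tg al -> branch_arrow s t al.
  exact: (notC_branch_arrow R_st R_pred_uniq R_succ_uniq sg_inj tg_inj R_sign AGinv_eq).
split; split.
- by move=> branch Cal; apply: C_cycle Cal branch.
- exact: notC_branch.
- by move=> cycle on_maxN; apply: cycle; apply: notC_branch; apply.
- exact: C_cycle.
Qed.
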